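(* $k$-monotonicity is extendable: for any finite poset $\mathcal{P}$, any subset $X\subseteq\mathcal{P}$, and any function $f\colon X\to\{0,1\}$ that is $k$-monotone on $X$, there exists $g\colon\mathcal{P}\to\{0,1\}$ with $g(x)=f(x)$ for all $x\in X$ such that $g$ is $k$-monotone on $\mathcal{P}$.
   Context: For a subset $S$ of a poset (with the induced order), a function $f\colon S\to\{0,1\}$ is $k$-monotone on $S$ if there is no chain $x_1\prec\cdots\prec x_{k+1}$ of elements of $S$ with $f(x_1)=1$ and $f(x_i)\neq f(x_{i+1})$ for all $i\in[k]$. *)

From mathcomp Require Import all_boot all_order.
Set Implicit Arguments. Unset Strict Implicit. Unset Printing Implicit Defensive.
Import Order.TTheory.
Local Open Scope order_scope.

(* f : T -> bool is k-monotone on S (with the induced order) iff there is no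
   chain x_1 < x_2 < ... < x_{k+1} of elements of S with f x_1 = true and
   f x_i <> f x_{i+1} for all i in [k].  The chain is x :: s with size s = k. *)
Definition kmonotone_on {d : Order.disp_t} {T : finPOrderType d}
  (k : nat) (S : {set T}) (f : T -> bool) : Prop :=
  ~ exists (x : T) (s : seq T),
      [/\ x \in S, all (fun y => y \in S) s, size s = k, f x &
          path (fun a b => (a < b) && (f a != f b)) x s].

From mathcomp Require Import all_boot all_order.
Import Order.TTheory.

Set Implicit Arguments.
Unset Strict Implicit.
Unset Printing Implicit Defensive.

(* Let [rank z] be the number of elements of a longest chain x_1 < ... < x_m
   of X, alternating under f and starting with f x_1 = true, that lies below z
   (capped at k + 1 elements).  The rank is monotone, it agrees in parity with
   f on X (a chain below x in X ending with the wrong value could be extended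
   by x), and it increases along every chain on which its parity alternates.
   So g := odd \o rank extends f, and a g-alternating chain of k + 1 elements
   starting at g = true would push the rank to k + 1, which is impossible when
   f is k-monotone on X. *)

Local Open Scope order_scope.

Lemma alternating_path_last (T : Type) (e : rel T) (f : T -> bool)
    (x : T) (s : seq T) :
  (forall a b, e a b -> f a != f b) ->
  path e x s -> f (last x s) = f x (+) odd (size s).
Proof.
move=> ef; elim: s x => [|y s IH] x /=; first by rewrite addbF.
case/andP=> /ef fxy /IH ->.
by move: fxy; case: (f x); case: (f y); case: (odd (size s)).
Qed.

Lemma nondecreasing_path_gap (d : Order.disp_t) (T : porderType d)
    (r : T -> nat) (x : T) (s : seq T) :
  {homo r : a b / a <= b >-> (a <= b)%N} ->
  path (fun a b => (a < b) && (r a != r b)) x s ->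
  (r x + size s <= r (last x s))%N.
Proof.
move=> r_homo; elim: s x => [|y s IH] x /=; first by rewrite addn0.
case/andP=> /andP[lt_xy neq_r] /IH le_y.
have lt_r : (r x < r y)%N by rewrite ltn_neqAle neq_r r_homo ?ltW.
by apply: leq_trans le_y; rewrite addnS ltn_add2r.
Qed.

Section AlternatingRank.

Variables (d : Order.disp_t) (T : finPOrderType d).
Variables (k : nat) (X : {set T}) (f : T -> bool).

Definition alt_rel : rel T := fun a b => (a < b) && (f a != f b).

Definition alt_chain (x : T) (s : seq T) : bool :=
  [&& x \in X, all (fun y => y \in X) s, f x & path alt_rel x s].

Definition chain_below (z : T) (m : nat) : bool :=
  [exists x, exists t : m.-tuple T, alt_chain x t && (last x t <= z)].

Definition rank (z : T) : nat := \max_(m < k.+1 | chain_below z m) m.+1.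

Lemma rank_le_succ z : (rank z <= k.+1)%N.
Proof. by apply/bigmax_leqP => m _; rewrite ltn_ord. Qed.

Lemma rank_gt_chain x s z :
  alt_chain x s -> (size s <= k)%N -> last x s <= z -> (size s < rank z)%N.
Proof.
move=> xs le_sk le_z; pose m : 'I_k.+1 := Ordinal (le_sk : size s < k.+1)%N.
apply: (@leq_bigmax_cond _ _ (fun i : 'I_k.+1 => i.+1) m).
by apply/existsP; exists x; apply/existsP; exists (in_tuple s); rewrite xs.
Qed.

Lemma rank_chain z : (0 < rank z)%N ->
  exists x s, [/\ alt_chain x s, size s = (rank z).-1 & last x s <= z].
Proof.
case: (pickP (fun m : 'I_k.+1 => chain_below z m)) => [m zm _ | none]; last first.
  by rewrite /rank big_pred0.
rewrite /rank (@bigop.bigmax_eq_arg _ m (fun i : 'I_k.+1 => chain_below z i) _ zm).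
case: arg_maxnP => // i below_i _.
case/existsP: below_i => x /existsP[t /andP[xt le_z]].
by exists x, t; rewrite size_tuple.
Qed.

Lemma rank_homo : {homo rank : z z' / z <= z' >-> (z <= z')%N}.
Proof.
move=> z z' le_zz'; apply/bigmax_leqP => m /existsP[x /existsP[t]].
case/andP=> xt le_z; apply: (leq_bigmax_cond (F := fun i : 'I_k.+1 => i.+1)).
by apply/existsP; exists x; apply/existsP; exists t; rewrite xt (le_trans le_z).
Qed.

Hypothesis f_kmono : kmonotone_on k X f.

Lemma rank_le z : (rank z <= k)%N.
Proof.
rewrite leqNgt; apply/negP => lt_k.
have rank_eq : rank z = k.+1 by apply/eqP; rewrite eqn_leq rank_le_succ.
have [|x [s [/and4P[xX sX fx xs] size_s _]]] := rank_chain (z := z).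
  by rewrite rank_eq.
by apply: f_kmono; exists x, s; rewrite size_s rank_eq.
Qed.

Lemma odd_rank z : z \in X -> odd (rank z) = f z.
Proof.
move=> zX; have [rank0 | rank_pos] := posnP (rank z).
  rewrite rank0; apply/esym/negbTE/negP => fz.
  suff : (0 < rank z)%N by rewrite rank0.
  by apply: (@rank_gt_chain z [::] z); rewrite /alt_chain ?zX ?fz.
have [x [s [xs size_s le_z]]] := rank_chain rank_pos.
have /and4P[xX sX fx path_s] := xs.
have f_last : f (last x s) = odd (rank z).
  rewrite (alternating_path_last (f := f) _ path_s) => [|a b /andP[] //].
  by rewrite fx size_s; case: (rank z) rank_pos.
rewrite -f_last; apply/eqP/negPn/negP => neq_f.
have lt_z : last x s < z.
  by rewrite lt_neqAle le_z andbT; apply: contraNneq neq_f => ->.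
have xsz : alt_chain x (rcons s z).
  by rewrite /alt_chain xX all_rcons zX sX fx rcons_path path_s /alt_rel lt_z neq_f.
have := rank_gt_chain xsz; rewrite last_rcons size_rcons size_s prednK //.
by move=> /(_ z (rank_le z) (lexx z)); rewrite ltnn.
Qed.

End AlternatingRank.

Theorem lemmaB7 (d : Order.disp_t) (T : finPOrderType d) (k : nat)
  (X : {set T}) (f : T -> bool) :
  kmonotone_on k X f ->
  exists g : T -> bool, (forall x, x \in X -> g x = f x) /\
    kmonotone_on k [set: T] g.
Proof.
move=> f_kmono; pose r := rank k X f.
exists (fun z => odd (r z)); split=> [x xX | [z [s [_ _ size_s gz path_s]]]].
  exact: odd_rank.
have odd_neq a b : odd (r a) != odd (r b) -> r a != r b.
  by apply: contra => /eqP ->.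
have path_r : path (fun a b => (a < b) && (r a != r b)) z s.
  by apply: sub_path path_s => a b /andP[-> /odd_neq].
have := nondecreasing_path_gap (@rank_homo _ _ k X f) path_r.
rewrite size_s => gap; have r_pos : (0 < r z)%N by case: (r z) gz.
have := leq_trans (leq_add r_pos (leqnn k)) gap.
by move=> /leq_trans /(_ (rank_le f_kmono _)); rewrite add1n ltnn.
Qed.
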